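(* Fix an integer $m>1$ and consider the $(m,m)$ algorithm on the complete graph on $N$ nodes. Let $X(t)$ be the number of nodes in state $1$ at time $t$. Then for every $i\in\{0,1,\ldots,N\}$, $$\mathbb{P}(X(\infty)=N\mid X(0)=i)=\frac{\sum_{k=0}^{i-1}\binom{N-1}{k}^{m-1}}{\sum_{k=0}^{N-1}\binom{N-1}{k}^{m-1}}$$ (an empty sum being $0$). Further, for every $\alpha\in(0,1/2)$ there is a constant $c>0$ not depending on $N$ such that $$h_N(\alpha)\le c\exp\Bigl(-(N-1)(m-1)D\bigl(\alpha;\tfrac12\bigr)\Bigr),$$ where $D(p;\tfrac12)=\log 2-H(p)$ with $H(p)=-p\log p-(1-p)\log(1-p)$, i.e. $D(p;\tfrac12)$ is the Kullback–Leibler divergence of the Bernoulli$(p)$ distribution from the Bernoulli$(1/2)$ distribution. Moreover, the two sides of this inequality are logarithmically equivalent as $N\to\infty$, i.e. $\lim_{N\to\infty}\frac1N\log h_N(\alpha)=-(m-1)D(\alpha;\tfrac12)$.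
   Context: The $(m,d)$ algorithm (integers $1\le d\le m$) on the complete graph on $N$ nodes: each node has a state in $\{0,1\}$ and an independent unit-rate exponential clock (Poisson process of rate 1), independent of all states. At each tick of its clock, a node samples $m$ nodes uniformly at random from all $N$ nodes, with replacement, and observes their current states; if at least $d$ of the sampled nodes have a state different from its own, it switches its state, otherwise it keeps it. The number $X(t)$ of nodes in state 1 is then a continuous-time Markov chain on $\{0,\ldots,N\}$ with rates $q_{n,n+1}=(N-n)\mathbb{P}(\mathrm{Bin}(m,n/N)\ge d)$ and $q_{n,n-1}=n\,\mathbb{P}(\mathrm{Bin}(m,(N-n)/N)\ge d)$; states $0$ and $N$ are absorbing, and $X(\infty)$ denotes the absorbing state eventually reached. The $(m,m)$ algorithm is the case $d=m$. For $\alpha=i/N$, $i\in\{0,\ldots,N\}$, define $h_N(\alpha)=\mathbb{P}(X(\infty)=N\mid X(0)=\lfloor\alpha N\rfloor)$, and for general $\alpha\in[0,1]$ define $h_N(\alpha)=(N\alpha-\lfloor N\alpha\rfloor)h_N(\lceil\alpha N\rceil/N)+(\lceil N\alpha\rceil-N\alpha)h_N(\lfloor\alpha N\rfloor/N)$ (linear interpolation). *)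

From Stdlib Require Import Reals Binomial.
From Coquelicot Require Import Coquelicot.
Open Scope R_scope.

Fixpoint sumR (f : nat -> R) (n : nat) : R :=
  match n with
  | O => 0
  | S n' => sumR f n' + f n'
  end.

Definition binom_tail (m d : nat) (p : R) : R :=
  sumR (fun j => if Nat.leb d j
                 then Binomial.C m j * p ^ j * (1 - p) ^ (m - j) else 0) (S m).

(* Transition rates of X(t) for the (m,d) algorithm on K_N. *)
Definition q_up (N m d n : nat) : R :=
  INR (N - n) * binom_tail m d (INR n / INR N).
Definition q_down (N m d n : nat) : R :=
  INR n * binom_tail m d (INR (N - n) / INR N).

(* Embedded jump chain of X: from an absorbing state (0 or N) it stays put;
   otherwise it jumps up / down with probabilities proportional to the rates
   (if the total rate were 0 the state would be absorbing; this never happens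
   for 0 < n < N). *)
Definition p_up (N m d n : nat) : R :=
  if Rlt_dec 0 (q_up N m d n + q_down N m d n)
  then q_up N m d n / (q_up N m d n + q_down N m d n) else 0.
Definition p_down (N m d n : nat) : R :=
  if Rlt_dec 0 (q_up N m d n + q_down N m d n)
  then q_down N m d n / (q_up N m d n + q_down N m d n) else 0.
Definition p_stay (N m d n : nat) : R :=
  if Rlt_dec 0 (q_up N m d n + q_down N m d n) then 0 else 1.

(* reach N m d k n = P(jump chain is at N after k jumps | start at n),
   i.e. the (n, N) entry of the k-th power of the transition matrix. *)
Fixpoint reach (N m d k n : nat) : R :=
  match k with
  | O => if Nat.eqb n N then 1 else 0
  | S k' =>
      if Nat.eqb n 0 then reach N m d k' 0
      else if Nat.eqb n N then reach N m d k' N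
      else p_up N m d n * reach N m d k' (S n)
           + p_down N m d n * reach N m d k' (n - 1)
           + p_stay N m d n * reach N m d k' n
  end.

(* P(X(infinity) = N | X(0) = i): since N is absorbing, the event
   {X(infinity) = N} is the increasing union over k of {jump chain at N after
   k jumps}, so its probability is the limit of reach _ _ _ k i. *)
Definition absorb_prob (N m d i : nat) : R :=
  real (Lim_seq (fun k => reach N m d k i)).

(* h_N(alpha), with linear interpolation between the grid points i/N. *)
Definition hN (N m d : nat) (alpha : R) : R :=
  let x := INR N * alpha in
  let f := Z.to_nat (Int_part x) in
  if Req_EM_T x (INR f) then absorb_prob N m d f
  else (x - INR f) * absorb_prob N m d (S f)
       + (INR (S f) - x) * absorb_prob N m d f.

Definition Hent (p : R) : R := - p * ln p - (1 - p) * ln (1 - p).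
Definition KL_half (p : R) : R := ln 2 - Hent p.

From Stdlib Require Import Reals Binomial Lra Lia ZArith.
From Coquelicot Require Import Coquelicot.
Open Scope R_scope.

(* For the (m,m) algorithm the rates are q_up(n) = (N-n)(n/N)^m and q_down(n) = n((N-n)/N)^m,
   and the weights w(k) = C(N-1,k)^(m-1) satisfy detailed balance
   q_up(n) w(n) = q_down(n) w(n-1).  Hence the normalised partial sums of the w(k) (the scale
   function of the birth-death chain) are harmonic for the jump chain with boundary values 0 and
   1; the gap between them and the k-step absorption probabilities solves the backward equation
   with zero boundary values, so it decays geometrically in k.

   For the large deviation estimate, h_N(alpha) lies between the formula at floor(N alpha) and
   at floor(N alpha)+1.  Below floor(N alpha) the weights decrease at least geometrically with
   ratio alpha/(1-alpha), so the partial sum is comparable to its last term, and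
   C(n, alpha n)/C(n, n/2) <= c exp(-n D(alpha;1/2)) follows from
   (1+1/k)^k <= e <= (1+1/k)^(k+1).  Conversely the total weight is at most 2^(n(m-1)) and
   C(n,k) >= n^n / ((n+1) k^k (n-k)^(n-k)), which gives the matching lower bound up to a
   polynomial factor. *)

(** * Finite sums and binomial coefficients *)

Lemma sumR_ext (f g : nat -> R) n :
  (forall k, (k < n)%nat -> f k = g k) -> sumR f n = sumR g n.
Proof.
  induction n as [|n IH]; intros H; simpl; [reflexivity|].
  rewrite IH by (intros; apply H; lia). rewrite H by lia. reflexivity.
Qed.

Lemma sumR_zero n : sumR (fun _ => 0) n = 0.
Proof. induction n as [|n IH]; simpl; [|rewrite IH]; ring. Qed.

Lemma sumR_scal_l c (f : nat -> R) n : sumR (fun k => c * f k) n = c * sumR f n.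
Proof. induction n as [|n IH]; simpl; [|rewrite IH]; ring. Qed.

Lemma sumR_const c n : sumR (fun _ => c) n = INR n * c.
Proof. induction n as [|n IH]; simpl sumR; [simpl; ring|]. rewrite IH, S_INR. ring. Qed.

Lemma sumR_le (f g : nat -> R) n :
  (forall k, (k < n)%nat -> f k <= g k) -> sumR f n <= sumR g n.
Proof.
  induction n as [|n IH]; intros H; simpl; [lra|].
  pose proof (H n ltac:(lia)). pose proof (IH ltac:(intros; apply H; lia)). lra.
Qed.

Lemma sumR_nonneg (f : nat -> R) n : (forall k, (k < n)%nat -> 0 <= f k) -> 0 <= sumR f n.
Proof. intros H. rewrite <- (sumR_zero n). exact (sumR_le _ _ n H). Qed.

Lemma sumR_le_prefix (f : nat -> R) a b :
  (forall k, 0 <= f k) -> (a <= b)%nat -> sumR f a <= sumR f b.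
Proof. intros Hf Hab. induction Hab as [|b _ IH]; simpl; [lra|]. pose proof (Hf b). lra. Qed.

Lemma sumR_term_le (f : nat -> R) n k : (forall k, 0 <= f k) -> (k < n)%nat -> f k <= sumR f n.
Proof.
  intros Hf Hk. apply Rle_trans with (sumR f (S k)); [|apply sumR_le_prefix; auto].
  simpl. pose proof (sumR_nonneg f k ltac:(intros; apply Hf)). lra.
Qed.

Lemma sumR_sum_f_R0 (f : nat -> R) n : sumR f (S n) = sum_f_R0 f n.
Proof. induction n as [|n IH]; [simpl; ring|]. change (sumR f (S n) + f (S n) = sum_f_R0 f (S n)). now rewrite IH. Qed.

Lemma sumR_geometric_le (w : nat -> R) th f : 0 <= th < 1 -> (forall k, 0 <= w k) ->
  (forall k, (k < f)%nat -> w k <= th * w (S k)) -> sumR w (S f) <= w f / (1 - th).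
Proof.
  intros [Hth0 Hth1] Hw Hratio.
  assert (H : forall K, (K <= f)%nat -> sumR w (S K) * (1 - th) <= w K).
  { induction K as [|K IH]; intros HK.
    - simpl. pose proof (Hw 0%nat). nra.
    - change (sumR w (S (S K))) with (sumR w (S K) + w (S K)).
      pose proof (IH ltac:(lia)). pose proof (Hratio K ltac:(lia)). pose proof (Hw (S K)). nra. }
  apply Rmult_le_reg_r with (1 - th); [lra|].
  unfold Rdiv. rewrite Rmult_assoc, Rinv_l, Rmult_1_r by lra. apply H; lia.
Qed.

Lemma sumR_pow_le (x : nat -> R) p K : (forall k, 0 <= x k) ->
  sumR (fun k => x k ^ S p) K <= sumR x K ^ S p.
Proof.
  intros Hx. set (s := sumR x K).
  apply Rle_trans with (sumR (fun k => s ^ p * x k) K).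
  - apply sumR_le. intros k Hk. simpl. rewrite Rmult_comm. apply Rmult_le_compat_r; auto.
    apply pow_incr. split; auto. apply sumR_term_le; auto.
  - rewrite sumR_scal_l. right. unfold s. simpl. ring.
Qed.

Lemma pow_le_one x n : 0 <= x <= 1 -> x ^ n <= 1.
Proof. intros H. induction n as [|n IH]; simpl; [lra|]. pose proof (pow_le x n ltac:(lra)). nra. Qed.

Lemma binom_pos n k : (k <= n)%nat -> 0 < Binomial.C n k.
Proof.
  intros. unfold Binomial.C. apply Rdiv_lt_0_compat; [apply lt_0_INR, lt_O_fact|].
  apply Rmult_lt_0_compat; apply lt_0_INR, lt_O_fact.
Qed.

(* For [k > n] the factorial formula of [Binomial.C] is not 0 but still nonnegative. *)
Lemma binom_nonneg n k : 0 <= Binomial.C n k.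
Proof.
  unfold Binomial.C. apply Rmult_le_pos; [apply pos_INR|]. left. apply Rinv_0_lt_compat.
  apply Rmult_lt_0_compat; apply lt_0_INR, lt_O_fact.
Qed.

Lemma binom_succ_mul n k : (k < n)%nat ->
  Binomial.C n (S k) * INR (S k) = Binomial.C n k * INR (n - k).
Proof. intros H. rewrite pascal_step3 by lia. field. apply not_0_INR. lia. Qed.

Lemma binom_row_sum n : sumR (Binomial.C n) (S n) = 2 ^ n.
Proof.
  rewrite sumR_sum_f_R0. replace 2 with (1 + 1) by ring. rewrite binomial.
  apply sum_eq. intros. rewrite !pow1. ring.
Qed.

Lemma binom_tail_all m p : binom_tail m m p = p ^ m.
Proof.
  unfold binom_tail. simpl. rewrite (sumR_ext _ (fun _ => 0)), sumR_zero.
  - rewrite Nat.leb_refl, C_n_n, Nat.sub_diag. simpl. ring.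
  - intros k Hk. destruct (Nat.leb m k) eqn:E; [apply Nat.leb_le in E; lia | reflexivity].
Qed.

(** * Absorption probabilities *)

Definition scale_incr (N m k : nat) : R := Binomial.C (N - 1) k ^ (m - 1).
Definition scale_total (N m : nat) : R := sumR (scale_incr N m) N.
Definition scale_fun (N m i : nat) : R := sumR (scale_incr N m) i / scale_total N m.

Lemma scale_incr_nonneg N m k : 0 <= scale_incr N m k.
Proof. apply pow_le, binom_nonneg. Qed.

Lemma scale_incr_pos N m k : (k < N)%nat -> 0 < scale_incr N m k.
Proof. intros. apply pow_lt, binom_pos. lia. Qed.

Lemma scale_incr_le_total N m k : (k < N)%nat -> scale_incr N m k <= scale_total N m.
Proof. intros. apply sumR_term_le; auto using scale_incr_nonneg. Qed.

Lemma scale_total_pos N m : (1 <= N)%nat -> 0 < scale_total N m.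
Proof.
  intros. apply Rlt_le_trans with (scale_incr N m 0); [apply scale_incr_pos; lia|].
  apply scale_incr_le_total. lia.
Qed.

Lemma scale_fun_0 N m : scale_fun N m 0 = 0.
Proof. unfold scale_fun. simpl. unfold Rdiv. ring. Qed.

Lemma scale_fun_N N m : (1 <= N)%nat -> scale_fun N m N = 1.
Proof.
  intros. pose proof (scale_total_pos N m H).
  change (scale_total N m / scale_total N m = 1). field. lra.
Qed.

Lemma scale_fun_le N m i j : (1 <= N)%nat -> (i <= j)%nat -> scale_fun N m i <= scale_fun N m j.
Proof.
  intros. pose proof (scale_total_pos N m H). unfold scale_fun. apply Rmult_le_compat_r.
  - left. apply Rinv_0_lt_compat. lra.
  - apply sumR_le_prefix; auto using scale_incr_nonneg.
Qed.

Lemma scale_fun_bounds N m i : (1 <= N)%nat -> (i <= N)%nat -> 0 <= scale_fun N m i <= 1.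
Proof.
  intros. rewrite <- (scale_fun_0 N m), <- (scale_fun_N N m) by auto.
  split; apply scale_fun_le; auto; lia.
Qed.

Lemma q_up_all N m n : q_up N m m n = INR (N - n) * (INR n / INR N) ^ m.
Proof. unfold q_up. now rewrite binom_tail_all. Qed.

Lemma q_down_all N m n : q_down N m m n = INR n * (INR (N - n) / INR N) ^ m.
Proof. unfold q_down. now rewrite binom_tail_all. Qed.

Lemma q_up_down_pos N m n : (0 < n < N)%nat -> 0 < q_up N m m n /\ 0 < q_down N m m n.
Proof.
  intros H. rewrite q_up_all, q_down_all.
  assert (0 < INR n) by (apply lt_0_INR; lia).
  assert (0 < INR (N - n)) by (apply lt_0_INR; lia).
  assert (0 < INR N) by (apply lt_0_INR; lia).
  split; apply Rmult_lt_0_compat; auto; apply pow_lt, Rdiv_lt_0_compat; auto.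
Qed.

Lemma detailed_balance N m n : (1 < m)%nat -> (0 < n < N)%nat ->
  q_up N m m n * scale_incr N m n = q_down N m m n * scale_incr N m (n - 1).
Proof.
  intros Hm H. rewrite q_up_all, q_down_all. unfold scale_incr.
  destruct n as [|k]; [lia|]. replace (S k - 1)%nat with k by lia.
  pose proof (binom_succ_mul (N - 1) k ltac:(lia)) as HC.
  replace (N - 1 - k)%nat with (N - S k)%nat in HC by lia.
  destruct m as [|p]; [lia|]. replace (S p - 1)%nat with p by lia.
  assert (HN : INR N <> 0) by (apply not_0_INR; lia).
  set (x := INR (S k)) in *. set (y := INR (N - S k)) in *.
  replace (y * (x / INR N) ^ S p * Binomial.C (N - 1) (S k) ^ p)
    with (y * (x / INR N) * (Binomial.C (N - 1) (S k) * x / INR N) ^ p)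
    by (unfold Rdiv; rewrite !Rpow_mult_distr; simpl; ring).
  replace (x * (y / INR N) ^ S p * Binomial.C (N - 1) k ^ p)
    with (x * (y / INR N) * (Binomial.C (N - 1) k * y / INR N) ^ p)
    by (unfold Rdiv; rewrite !Rpow_mult_distr; simpl; ring).
  rewrite HC. field. auto.
Qed.

Lemma p_up_down_interior N m n : (0 < n < N)%nat ->
  p_up N m m n = q_up N m m n / (q_up N m m n + q_down N m m n) /\
  p_down N m m n = q_down N m m n / (q_up N m m n + q_down N m m n) /\
  p_stay N m m n = 0.
Proof.
  intros H. destruct (q_up_down_pos N m n H). unfold p_up, p_down, p_stay.
  destruct (Rlt_dec 0 (q_up N m m n + q_down N m m n)); [auto | lra].
Qed.

Lemma p_up_down_prob N m n : (0 < n < N)%nat ->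
  0 < p_up N m m n /\ 0 <= p_down N m m n /\ p_up N m m n + p_down N m m n = 1.
Proof.
  intros H. destruct (p_up_down_interior N m n H) as [-> [-> _]].
  destruct (q_up_down_pos N m n H).
  split; [|split]; [apply Rdiv_lt_0_compat | apply Rdiv_le_0_compat | field]; lra.
Qed.

Lemma scale_fun_harmonic N m n : (1 < m)%nat -> (0 < n < N)%nat ->
  scale_fun N m n = p_up N m m n * scale_fun N m (S n) + p_down N m m n * scale_fun N m (n - 1).
Proof.
  intros Hm H. destruct (p_up_down_interior N m n H) as [-> [-> _]].
  pose proof (detailed_balance N m n Hm H) as Hbal.
  destruct (q_up_down_pos N m n H). pose proof (scale_total_pos N m ltac:(lia)).
  unfold scale_fun. destruct n as [|k]; [lia|]. replace (S k - 1)%nat with k in * by lia.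
  simpl sumR. set (a := q_up N m m (S k)) in *. set (b := q_down N m m (S k)) in *.
  apply Rmult_eq_reg_r with ((a + b) * scale_total N m); [|apply Rgt_not_eq, Rmult_lt_0_compat; lra].
  field_simplify; [|lra..]. nra.
Qed.

Lemma exists_uniform_lower_bound (g : nat -> R) (P : nat -> Prop) N :
  (forall n, (n < N)%nat -> P n -> 0 < g n) ->
  exists p, 0 < p <= 1 /\ forall n, (n < N)%nat -> P n -> p <= g n.
Proof.
  induction N as [|N IH]; intros Hg.
  - exists 1. split; [lra | intros; lia].
  - destruct IH as [p [Hp Hpg]]; [intros; apply Hg; auto; lia|].
    destruct (Rlt_dec 0 (g N)) as [HgN | HgN].
    + exists (Rmin p (g N)). split.
      * split; [apply Rmin_glb_lt; lra | pose proof (Rmin_l p (g N)); lra].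
      * intros n Hn HP. destruct (Nat.eq_dec n N) as [->|]; [apply Rmin_r|].
        eapply Rle_trans; [apply Rmin_l | apply Hpg; auto; lia].
    + exists p. split; auto. intros n Hn HP. destruct (Nat.eq_dec n N) as [->|].
      * exfalso. apply HgN, Hg; auto.
      * apply Hpg; auto; lia.
Qed.

(* Solutions of the backward equation of a birth-death chain on [0..N] that vanish at both
   ends decay geometrically: within [N] steps the chain is absorbed at [N] with probability at
   least [p^N], where [p] bounds the upward jump probabilities from below. *)
Section DirichletDecay.
Variables (N : nat) (pu pd : nat -> R) (e : nat -> nat -> R).
Hypothesis jump_prob : forall n, (0 < n < N)%nat -> 0 < pu n /\ 0 <= pd n /\ pu n + pd n = 1.
Hypothesis e_0 : forall k, e k 0 = 0.
Hypothesis e_N : forall k, e k N = 0.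
Hypothesis e_step : forall k n, (0 < n < N)%nat ->
  e (S k) n = pu n * e k (S n) + pd n * e k (n - 1).

Lemma e_step_abs k n : (0 < n < N)%nat ->
  Rabs (e (S k) n) <= pu n * Rabs (e k (S n)) + pd n * Rabs (e k (n - 1)).
Proof.
  intros H. destruct (jump_prob n H) as [Hu [Hd _]]. rewrite e_step by auto.
  eapply Rle_trans; [apply Rabs_triang|].
  rewrite !Rabs_mult, (Rabs_right (pu n)), (Rabs_right (pd n)) by lra. lra.
Qed.

Lemma e_bound_step k M : (forall n, (n <= N)%nat -> Rabs (e k n) <= M) ->
  forall n, (n <= N)%nat -> Rabs (e (S k) n) <= M.
Proof.
  intros H n Hn. assert (HM : 0 <= M) by (eapply Rle_trans; [apply Rabs_pos | apply (H 0%nat); lia]).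
  destruct (Nat.eq_dec n 0) as [->|]; [rewrite e_0, Rabs_R0; auto|].
  destruct (Nat.eq_dec n N) as [->|]; [rewrite e_N, Rabs_R0; auto|].
  destruct (jump_prob n ltac:(lia)) as [Hu [Hd Hsum]].
  eapply Rle_trans; [apply e_step_abs; lia|].
  pose proof (H (S n) ltac:(lia)). pose proof (H (n - 1)%nat ltac:(lia)). nra.
Qed.

Lemma e_bound_iter k M j : (forall n, (n <= N)%nat -> Rabs (e k n) <= M) ->
  forall n, (n <= N)%nat -> Rabs (e (j + k) n) <= M.
Proof. intros H. induction j as [|j IH]; simpl; auto using e_bound_step. Qed.

Lemma e_contract p k M : 0 < p <= 1 -> (forall n, (0 < n < N)%nat -> p <= pu n) ->
  (forall n, (n <= N)%nat -> Rabs (e k n) <= M) ->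
  forall j n, (n <= N)%nat -> (N <= n + j)%nat -> Rabs (e (j + k) n) <= M * (1 - p ^ (N - n)).
Proof.
  intros Hp Hpu H. assert (HM : 0 <= M) by (eapply Rle_trans; [apply Rabs_pos | apply (H 0%nat); lia]).
  induction j as [|j IH]; intros n Hn Hj.
  - replace n with N by lia. rewrite e_N, Rabs_R0, Nat.sub_diag. simpl. lra.
  - destruct (Nat.eq_dec n N) as [->|]; [rewrite e_N, Rabs_R0, Nat.sub_diag; simpl; lra|].
    assert (Hpn : 0 <= p ^ (N - n) <= 1) by (split; [apply pow_le | apply pow_le_one]; lra).
    destruct (Nat.eq_dec n 0) as [->|]; [rewrite e_0, Rabs_R0; nra|].
    destruct (jump_prob n ltac:(lia)) as [Hu [Hd Hsum]].
    rewrite Nat.add_succ_l. eapply Rle_trans; [apply e_step_abs; lia|].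
    pose proof (IH (S n) ltac:(lia) ltac:(lia)).
    pose proof (e_bound_iter k M j H (n - 1)%nat ltac:(lia)).
    pose proof (Hpu n ltac:(lia)).
    replace (N - n)%nat with (S (N - S n)) by lia. rewrite <- tech_pow_Rmult.
    set (t := p ^ (N - S n)) in *. assert (0 <= t) by (apply pow_le; lra).
    apply Rle_trans with (pu n * (M * (1 - t)) + pd n * M).
    { apply Rplus_le_compat; apply Rmult_le_compat_l; lra. }
    assert (p * t * M <= pu n * t * M) by (apply Rmult_le_compat_r; [auto | nra]). nra.
Qed.

Lemma e_geometric_decay p M : 0 < p <= 1 -> (forall n, (0 < n < N)%nat -> p <= pu n) ->
  (forall n, (n <= N)%nat -> Rabs (e 0 n) <= M) ->
  forall q r n, (n <= N)%nat -> Rabs (e (q * N + r) n) <= M * (1 - p ^ N) ^ q.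
Proof.
  intros Hp Hpu H0. assert (HpN : 0 <= p ^ N <= 1) by (split; [apply pow_le | apply pow_le_one]; lra).
  induction q as [|q IH]; intros r n Hn.
  - simpl. rewrite Rmult_1_r, <- (Nat.add_0_r r). apply e_bound_iter; auto.
  - replace (S q * N + r)%nat with (N + (q * N + r))%nat by lia.
    eapply Rle_trans; [apply (e_contract p _ _ Hp Hpu (fun n Hn => IH r n Hn)); lia|].
    assert (p ^ N <= p ^ (N - n)).
    { replace N with ((N - n) + n)%nat at 1 by lia. rewrite pow_add.
      pose proof (pow_le p (N - n) ltac:(lra)). pose proof (pow_le_one p n ltac:(lra)). nra. }
    assert (0 <= M * (1 - p ^ N) ^ q).
    { apply Rmult_le_pos; [|apply pow_le; lra].
      eapply Rle_trans; [apply Rabs_pos | apply (H0 0%nat); lia]. }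
    simpl. nra.
Qed.

Lemma e_cvg_0 n : (n <= N)%nat -> is_lim_seq (fun k => e k n) 0.
Proof.
  intros Hn. destruct (Nat.eq_dec n 0) as [->|Hn0].
  { apply is_lim_seq_ext with (fun _ => 0); [intros; rewrite e_0; reflexivity | apply is_lim_seq_const]. }
  destruct (exists_uniform_lower_bound pu (fun n => (0 < n)%nat) N) as [p [Hp Hpu]].
  { intros n' Hn' Hpos. apply jump_prob. lia. }
  set (M := sumR (fun n => Rabs (e 0 n)) (S N)).
  assert (HM : forall n, (n <= N)%nat -> Rabs (e 0 n) <= M).
  { intros. apply (sumR_term_le (fun n => Rabs (e 0 n))); [intros; apply Rabs_pos | lia]. }
  assert (HM0 : 0 <= M) by (eapply Rle_trans; [apply Rabs_pos | apply (HM 0%nat); lia]).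
  assert (Hr : 0 <= 1 - p ^ N < 1).
  { assert (0 < p ^ N) by (apply pow_lt; lra). pose proof (pow_le_one p N ltac:(lra)). lra. }
  apply is_lim_seq_Reals. intros eps Heps.
  destruct (pow_lt_1_zero (1 - p ^ N) ltac:(rewrite Rabs_right; lra) (eps / (M + 1))
              ltac:(apply Rdiv_lt_0_compat; lra)) as [Q HQ].
  exists (Q * N)%nat. intros k Hk. unfold R_dist. rewrite Rminus_0_r.
  assert (HN : (0 < N)%nat) by lia.
  pose proof (Nat.div_mod k N ltac:(lia)) as Hdiv.
  assert (HQk : (k / N >= Q)%nat) by (apply Nat.div_le_lower_bound; lia).
  pose proof (e_geometric_decay p M Hp (fun n H => Hpu n ltac:(lia) ltac:(lia)) HM (k / N) (k mod N) n Hn) as G.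
  replace (k / N * N + k mod N)%nat with k in G by lia.
  specialize (HQ (k / N)%nat HQk). rewrite Rabs_right in HQ by (apply Rle_ge, pow_le; lra).
  assert (0 <= (1 - p ^ N) ^ (k / N)) by (apply pow_le; lra).
  apply Rmult_lt_compat_l with (r := M + 1) in HQ; [|lra].
  replace ((M + 1) * (eps / (M + 1))) with eps in HQ by (field; lra). nra.
Qed.

End DirichletDecay.

Lemma reach_at_0 N m d k : (1 <= N)%nat -> reach N m d k 0 = 0.
Proof. intros HN. induction k as [|k IH]; simpl; [destruct N; [lia | reflexivity] | exact IH]. Qed.

Lemma reach_at_N N m d k : reach N m d k N = 1.
Proof.
  induction k as [|k IH]; simpl; [now rewrite Nat.eqb_refl|].
  destruct (Nat.eqb N 0) eqn:E; [apply Nat.eqb_eq in E; subst; exact IH|].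
  now rewrite Nat.eqb_refl.
Qed.

Lemma reach_step N m k n : (0 < n < N)%nat ->
  reach N m m (S k) n = p_up N m m n * reach N m m k (S n) + p_down N m m n * reach N m m k (n - 1).
Proof.
  intros H. destruct (p_up_down_interior N m n H) as [_ [_ Hstay]]. simpl.
  destruct (Nat.eqb n 0) eqn:E0; [apply Nat.eqb_eq in E0; lia|].
  destruct (Nat.eqb n N) eqn:EN; [apply Nat.eqb_eq in EN; lia|].
  rewrite Hstay. ring.
Qed.

Theorem absorb_prob_scale_fun N m i : (1 < m)%nat -> (1 <= N)%nat -> (i <= N)%nat ->
  absorb_prob N m m i = scale_fun N m i.
Proof.
  intros Hm HN Hi.
  assert (Hcvg : is_lim_seq (fun k => scale_fun N m i - reach N m m k i) 0).
  { refine (e_cvg_0 N (p_up N m m) (p_down N m m)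
      (fun k n => scale_fun N m n - reach N m m k n) _ _ _ _ i Hi).
    - apply p_up_down_prob.
    - intros k. rewrite scale_fun_0, reach_at_0 by auto. ring.
    - intros k. rewrite scale_fun_N, reach_at_N by auto. ring.
    - intros k n Hn. rewrite reach_step, (scale_fun_harmonic N m n) by auto. ring. }
  assert (Hreach : is_lim_seq (fun k => reach N m m k i) (scale_fun N m i - 0)).
  { apply is_lim_seq_ext with (fun k => scale_fun N m i - (scale_fun N m i - reach N m m k i)).
    - intros k. ring.
    - apply is_lim_seq_minus'; [apply is_lim_seq_const | exact Hcvg]. }
  unfold absorb_prob. rewrite (is_lim_seq_unique _ _ Hreach). simpl. f_equal. ring.
Qed.

(** * Entropy estimates for binomial coefficients *)

Lemma exp_le_compat x y : x <= y -> exp x <= exp y.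
Proof. intros [H | ->]; [left; apply exp_increasing; auto | lra]. Qed.

Lemma ln_le_sub_one y : 0 < y -> ln y <= y - 1.
Proof. intros Hy. pose proof (exp_ineq1_le (ln y)). rewrite exp_ln in H by auto. lra. Qed.

Lemma exp_pow a j : exp a ^ j = exp (INR j * a).
Proof.
  induction j as [|j IH]; simpl; [now rewrite Rmult_0_l, exp_0|].
  rewrite IH, <- exp_plus. f_equal. destruct j; simpl; ring.
Qed.

Lemma pow_le_pow_exp a b c j : 0 <= a -> a <= b * exp c -> a ^ j <= b ^ j * exp (INR j * c).
Proof. intros. rewrite <- exp_pow, <- Rpow_mult_distr. apply pow_incr. lra. Qed.

Lemma mul_ln_div_le a b : 0 < a -> 0 < b -> a * ln (b / a) <= b - a.
Proof.
  intros. pose proof (ln_le_sub_one (b / a) ltac:(apply Rdiv_lt_0_compat; auto)) as H1.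
  apply Rmult_le_compat_l with (r := a) in H1; [|lra].
  replace (a * (b / a - 1)) with (b - a) in H1 by (field; lra). lra.
Qed.

(* The two halves of [(1 + 1/k)^k <= e <= (1 + 1/k)^(k+1)]. *)
Lemma pow_succ_le_exp_mul d : INR (S d) ^ d <= exp 1 * INR d ^ d.
Proof.
  destruct (Nat.eq_dec d 0) as [->|Hd]; [simpl; pose proof (exp_ineq1_le 1); lra|].
  assert (HdR : 0 < INR d) by (apply lt_0_INR; lia).
  assert (H : INR (S d) <= INR d * exp (/ INR d)).
  { pose proof (exp_ineq1_le (/ INR d)). rewrite S_INR.
    apply Rle_trans with (INR d * (1 + / INR d)); [right; field; lra | apply Rmult_le_compat_l; lra]. }
  pose proof (pow_le_pow_exp _ _ _ d (pos_INR (S d)) H) as Hp.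
  replace (INR d * / INR d) with 1 in Hp by (field; lra). lra.
Qed.

Lemma exp_mul_pow_le k : exp 1 * INR k ^ S k <= INR (S k) ^ S k.
Proof.
  assert (HkR : 0 <= INR k) by apply pos_INR. rewrite S_INR.
  assert (H : INR k <= (INR k + 1) * exp (- / (INR k + 1))).
  { pose proof (exp_ineq1_le (- / (INR k + 1))).
    apply Rle_trans with ((INR k + 1) * (1 + - / (INR k + 1))); [right; field; lra|].
    apply Rmult_le_compat_l; lra. }
  pose proof (pow_le_pow_exp _ _ _ (S k) HkR H) as Hp.
  replace (INR (S k) * - / (INR k + 1)) with (- (1)) in Hp by (rewrite S_INR; field; lra).
  rewrite exp_Ropp in Hp. pose proof (exp_pos 1).
  apply Rmult_le_reg_r with (/ exp 1); [apply Rinv_0_lt_compat; lra|].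
  rewrite Rmult_comm, <- Rmult_assoc, Rinv_l, Rmult_1_l by lra. exact Hp.
Qed.

(* [n^n / entropy_denom n k = exp (n H(k/n))] is the entropy approximation of [C(n,k)]. *)
Definition entropy_denom (n k : nat) : R := INR k ^ k * INR (n - k) ^ (n - k).

Lemma entropy_denom_pos n k : 0 < entropy_denom n k.
Proof.
  assert (Hpow : forall j : nat, 0 < INR j ^ j) by (intros [|j]; [simpl; lra | apply pow_lt, lt_0_INR; lia]).
  apply Rmult_lt_0_compat; apply Hpow.
Qed.

Lemma ln_entropy_denom n k : (0 < k < n)%nat ->
  ln (entropy_denom n k) = INR k * ln (INR k) + INR (n - k) * ln (INR (n - k)).
Proof.
  intros. unfold entropy_denom.
  assert (0 < INR k) by (apply lt_0_INR; lia). assert (0 < INR (n - k)) by (apply lt_0_INR; lia).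
  rewrite ln_mult by (apply pow_lt; auto). now rewrite !ln_pow by auto.
Qed.

Lemma entropy_denom_step n k : (S k <= n)%nat ->
  INR k * entropy_denom n k <= INR (n - k) * entropy_denom n (S k).
Proof.
  intros Hkn. unfold entropy_denom.
  set (d := (n - S k)%nat). replace (n - k)%nat with (S d) by (unfold d; lia).
  pose proof (exp_mul_pow_le k) as Hk. pose proof (pow_succ_le_exp_mul d) as Hd.
  pose proof (exp_pos 1).
  assert (0 <= INR k ^ S k) by (apply pow_le, pos_INR).
  assert (0 <= INR d ^ d) by (apply pow_le, pos_INR).
  assert (0 <= INR (S d) ^ d) by (apply pow_le, pos_INR).
  assert (0 <= INR (S k) ^ S k) by (apply pow_le, pos_INR).
  apply Rmult_le_reg_l with (exp 1); auto.
  replace (INR k * (INR k ^ k * INR (S d) ^ S d)) with (INR (S d) * (INR k ^ S k * INR (S d) ^ d)) by (simpl; ring).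
  apply Rle_trans with (INR (S d) * (exp 1 * INR k ^ S k) * INR (S d) ^ d); [right; ring|].
  apply Rle_trans with (INR (S d) * INR (S k) ^ S k * (exp 1 * INR d ^ d)); [|right; ring].
  assert (0 <= INR (S d)) by apply pos_INR.
  apply Rmult_le_compat; [apply Rmult_le_pos; nra | auto | apply Rmult_le_compat_l; auto | exact Hd].
Qed.

Lemma binom_entropy_mono n f k : (f <= k <= n)%nat ->
  INR f * entropy_denom n f * Binomial.C n f <= INR k * entropy_denom n k * Binomial.C n k.
Proof.
  intros [Hfk Hkn]. induction Hfk as [|k Hfk IH]; [lra|].
  eapply Rle_trans; [apply IH; lia|].
  pose proof (entropy_denom_step n k ltac:(lia)) as Hstep.
  pose proof (binom_succ_mul n k ltac:(lia)) as HC. pose proof (binom_nonneg n k).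
  replace (INR (S k) * entropy_denom n (S k) * Binomial.C n (S k))
    with (Binomial.C n k * (INR (n - k) * entropy_denom n (S k)))
    by (transitivity (Binomial.C n (S k) * INR (S k) * entropy_denom n (S k)); [rewrite HC; ring | ring]).
  replace (INR k * entropy_denom n k * Binomial.C n k)
    with (Binomial.C n k * (INR k * entropy_denom n k)) by ring.
  apply Rmult_le_compat_l; auto.
Qed.

Section BinomialMaxTerm.
Variables n k : nat.
Hypothesis Hk : (0 < k < n)%nat.

(* The largest term of the expansion of [(k + (n - k))^n] is the [k]-th. *)
Let term (j : nat) : R := Binomial.C n j * INR k ^ j * INR (n - k) ^ (n - j).

Let term_nonneg j : 0 <= term j.
Proof. apply Rmult_le_pos; [apply Rmult_le_pos|]; auto using binom_nonneg, pow_le, pos_INR. Qed.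

Let term_succ j : (j < n)%nat ->
  term (S j) * (INR (S j) * INR (n - k)) = term j * (INR (n - j) * INR k).
Proof.
  intros. unfold term. pose proof (binom_succ_mul n j H) as HC.
  replace (n - j)%nat with (S (n - S j)) by lia.
  transitivity ((Binomial.C n (S j) * INR (S j)) * INR k ^ S j * INR (n - k) ^ S (n - S j)); [simpl; ring|].
  rewrite HC. replace (n - j)%nat with (S (n - S j)) by lia. simpl. ring.
Qed.

Let term_le_succ j : (j < k)%nat -> term j <= term (S j).
Proof.
  intros. pose proof (term_succ j ltac:(lia)). pose proof (term_nonneg j).
  assert (Hp : 0 < INR (S j) * INR (n - k)) by (apply Rmult_lt_0_compat; apply lt_0_INR; lia).
  assert (INR (S j) * INR (n - k) <= INR (n - j) * INR k) by (rewrite <- !mult_INR; apply le_INR; nia).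
  apply Rmult_le_reg_r with (INR (S j) * INR (n - k)); auto. rewrite H0.
  apply Rmult_le_compat_l; auto.
Qed.

Let term_succ_le j : (k <= j < n)%nat -> term (S j) <= term j.
Proof.
  intros. pose proof (term_succ j ltac:(lia)). pose proof (term_nonneg j).
  assert (Hp : 0 < INR (S j) * INR (n - k)) by (apply Rmult_lt_0_compat; apply lt_0_INR; lia).
  assert (INR (n - j) * INR k <= INR (S j) * INR (n - k)) by (rewrite <- !mult_INR; apply le_INR; nia).
  apply Rmult_le_reg_r with (INR (S j) * INR (n - k)); auto. rewrite H0.
  apply Rmult_le_compat_l; auto.
Qed.

Let term_le_center j : (j <= n)%nat -> term j <= term k.
Proof.
  intros Hj. destruct (le_lt_dec j k) as [Hjk | Hjk].
  - assert (H : forall d, (d <= k)%nat -> term (k - d) <= term k).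
    { induction d as [|d IH]; intros Hd; [rewrite Nat.sub_0_r; lra|].
      eapply Rle_trans; [|apply IH; lia].
      replace (k - d)%nat with (S (k - S d)) by lia. apply term_le_succ. lia. }
    replace j with (k - (k - j))%nat by lia. apply H. lia.
  - assert (H : forall d, (k + d <= n)%nat -> term (k + d) <= term k).
    { induction d as [|d IH]; intros Hd; [rewrite Nat.add_0_r; lra|].
      eapply Rle_trans; [|apply IH; lia].
      replace (k + S d)%nat with (S (k + d)) by lia. apply term_succ_le. lia. }
    replace j with (k + (j - k))%nat by lia. apply H. lia.
Qed.

Lemma binom_max_term : INR n ^ n <= INR (S n) * (Binomial.C n k * entropy_denom n k).
Proof.
  pose proof (binomial (INR k) (INR (n - k)) n) as Hbin.
  replace (INR k + INR (n - k)) with (INR n) in Hbin by (rewrite minus_INR by lia; ring).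
  rewrite Hbin, <- sumR_sum_f_R0, <- sumR_const.
  replace (Binomial.C n k * entropy_denom n k) with (term k) by (unfold term, entropy_denom; ring).
  apply sumR_le. intros j Hj. apply term_le_center. lia.
Qed.
End BinomialMaxTerm.

Section EntropyBounds.
Variable al : R.
Hypothesis Hal : 0 < al < 1.

Lemma ln_entropy_denom_ge n f : (0 < f < n)%nat ->
  INR n * ln (INR n) + INR f * ln al + INR (n - f) * ln (1 - al) <= ln (entropy_denom n f).
Proof.
  intros H. rewrite ln_entropy_denom by auto.
  assert (0 < INR f) by (apply lt_0_INR; lia). assert (0 < INR (n - f)) by (apply lt_0_INR; lia).
  assert (0 < INR n) by (apply lt_0_INR; lia).
  pose proof (mul_ln_div_le (INR f) (INR n * al) ltac:(lra) ltac:(nra)) as G1.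
  pose proof (mul_ln_div_le (INR (n - f)) (INR n * (1 - al)) ltac:(lra) ltac:(nra)) as G2.
  rewrite ln_div, ln_mult in G1, G2 by nra.
  rewrite minus_INR in * by lia. nra.
Qed.

Lemma ln_entropy_denom_le n k : (0 < k < n)%nat ->
  ln (entropy_denom n k) <=
  INR n * ln (INR n) - INR n * Hent al + (INR n * al - INR k) * (ln (INR (n - k)) - ln (INR k)).
Proof.
  intros H. rewrite ln_entropy_denom by auto. unfold Hent.
  assert (0 < INR k) by (apply lt_0_INR; lia). assert (0 < INR (n - k)) by (apply lt_0_INR; lia).
  assert (0 < INR n) by (apply lt_0_INR; lia).
  pose proof (mul_ln_div_le (INR n * al) (INR k) ltac:(nra) ltac:(lra)) as G1.
  pose proof (mul_ln_div_le (INR n * (1 - al)) (INR (n - k)) ltac:(nra) ltac:(lra)) as G2.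
  rewrite ln_div, ln_mult in G1, G2 by nra.
  rewrite minus_INR in * by lia. nra.
Qed.

End EntropyBounds.

Lemma ln_entropy_denom_half n h : (1 <= h)%nat -> (2 * h <= n <= 2 * h + 1)%nat ->
  ln (entropy_denom n h) <= INR n * ln (INR n) - INR n * ln 2 + 1.
Proof.
  intros Hh Hn. rewrite ln_entropy_denom by lia.
  assert (0 < INR h) by (apply lt_0_INR; lia). assert (0 < INR (n - h)) by (apply lt_0_INR; lia).
  assert (0 < INR n) by (apply lt_0_INR; lia).
  pose proof (ln_le_sub_one (2 * INR h / INR n) ltac:(apply Rdiv_lt_0_compat; lra)) as A.
  pose proof (ln_le_sub_one (2 * INR (n - h) / INR n) ltac:(apply Rdiv_lt_0_compat; lra)) as B.
  rewrite ln_div, ln_mult in A, B by lra.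
  apply Rmult_le_compat_l with (r := INR h) in A; [|lra].
  apply Rmult_le_compat_l with (r := INR (n - h)) in B; [|lra].
  assert (Hn' : 2 * INR h <= INR n <= 2 * INR h + 1).
  { replace (2 * INR h) with (INR (2 * h)) by (rewrite mult_INR; simpl; ring).
    rewrite <- S_INR. split; apply le_INR; lia. }
  rewrite minus_INR in * by lia.
  assert (Q : INR h * (2 * INR h / INR n - 1) + (INR n - INR h) * (2 * (INR n - INR h) / INR n - 1)
              = (2 * INR h - INR n) ^ 2 / INR n) by (field; lra).
  assert ((2 * INR h - INR n) ^ 2 / INR n <= 1).
  { apply Rmult_le_reg_r with (INR n); auto. unfold Rdiv. rewrite Rmult_assoc, Rinv_l by lra.
    assert (1 <= INR n) by (apply (le_INR 1); lia). nra. }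
  nra.
Qed.

Lemma KL_half_nonneg al : 0 < al < 1 -> 0 <= KL_half al.
Proof.
  intros. unfold KL_half, Hent.
  pose proof (mul_ln_div_le al (/ 2) ltac:(lra) ltac:(lra)).
  pose proof (mul_ln_div_le (1 - al) (/ 2) ltac:(lra) ltac:(lra)).
  rewrite ln_div, ln_Rinv in * by lra. nra.
Qed.

(** * Large deviations of [h_N] *)

Definition floor_nat (x : R) : nat := Z.to_nat (Int_part x).

Lemma floor_nat_spec x : 0 <= x -> INR (floor_nat x) <= x < INR (floor_nat x) + 1.
Proof.
  intros H. destruct (base_Int_part x) as [A B].
  assert (Hz : (-1 < Int_part x)%Z) by (apply lt_IZR; lra).
  unfold floor_nat. rewrite INR_IZR_INZ, Z2Nat.id by lia. lra.
Qed.

Lemma hN_between N m al : (1 < m)%nat -> (1 <= N)%nat -> 0 <= al ->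
  (S (floor_nat (INR N * al)) <= N)%nat ->
  scale_fun N m (floor_nat (INR N * al)) <= hN N m m al <= scale_fun N m (S (floor_nat (INR N * al))).
Proof.
  intros Hm HN Hal Hf. unfold hN. cbv zeta. fold (floor_nat (INR N * al)).
  set (f := floor_nat (INR N * al)) in *.
  assert (F : INR f <= INR N * al < INR f + 1) by (apply floor_nat_spec, Rmult_le_pos; auto using pos_INR).
  pose proof (scale_fun_le N m f (S f) HN ltac:(lia)).
  rewrite !absorb_prob_scale_fun by (auto; lia).
  destruct (Req_EM_T (INR N * al) (INR f)); [lra|]. rewrite S_INR. nra.
Qed.

Lemma binom_le_mul_succ n K th : (K < n)%nat -> INR (S K) <= th * INR (n - K) ->
  Binomial.C n K <= th * Binomial.C n (S K).
Proof.
  intros HK Hth. pose proof (binom_succ_mul n K HK) as HC.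
  assert (HnK : 0 < INR (n - K)) by (apply lt_0_INR; lia).
  pose proof (binom_nonneg n (S K)).
  apply Rmult_le_reg_r with (INR (n - K)); auto. rewrite <- HC. nra.
Qed.

Lemma scale_fun_le_ratio N m f h th : 0 <= th < 1 -> (h < N)%nat ->
  (forall K, (K < f)%nat -> scale_incr N m K <= th * scale_incr N m (S K)) ->
  scale_fun N m (S f) <= scale_incr N m f / scale_incr N m h / (1 - th).
Proof.
  intros Hth Hh Hgeom.
  pose proof (sumR_geometric_le _ _ _ Hth (scale_incr_nonneg N m) Hgeom) as Hsum.
  pose proof (scale_incr_pos N m h Hh). pose proof (scale_incr_le_total N m h Hh).
  apply Rle_trans with (scale_incr N m f / (1 - th) / scale_incr N m h); [|right; field; lra].
  unfold scale_fun. unfold Rdiv. apply Rmult_le_compat; try lra.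
  - apply sumR_nonneg. intros. apply scale_incr_nonneg.
  - left. apply Rinv_0_lt_compat. lra.
  - apply Rinv_le_contravar; lra.
Qed.

Lemma binom_ratio_entropy al n f h : 0 < al < 1 / 2 -> (1 <= f <= h)%nat ->
  (2 * h <= n <= 2 * h + 1)%nat -> al * INR h <= INR f -> INR f <= (INR n + 1) * al ->
  Binomial.C n f <= exp (1 + al * (ln (1 - al) - ln al) - ln al - INR n * KL_half al) * Binomial.C n h.
Proof.
  intros Hal Hfh Hn Hhf Hfn.
  assert (HfR : 0 < INR f) by (apply lt_0_INR; lia). assert (HhR : 0 < INR h) by (apply lt_0_INR; lia).
  pose proof (entropy_denom_pos n f). pose proof (entropy_denom_pos n h).
  set (R := INR h * entropy_denom n h / (INR f * entropy_denom n f)).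
  assert (HR : 0 < R) by (apply Rdiv_lt_0_compat; apply Rmult_lt_0_compat; auto).
  assert (HCR : Binomial.C n f <= R * Binomial.C n h).
  { pose proof (binom_entropy_mono n f h ltac:(lia)).
    apply Rmult_le_reg_l with (INR f * entropy_denom n f); [apply Rmult_lt_0_compat; auto|].
    unfold R. replace (INR f * entropy_denom n f * (INR h * entropy_denom n h / (INR f * entropy_denom n f) * Binomial.C n h))
      with (INR h * entropy_denom n h * Binomial.C n h) by (field; lra). lra. }
  assert (HlnR : ln R <= 1 + al * (ln (1 - al) - ln al) - ln al - INR n * KL_half al).
  { unfold R. rewrite ln_div by (apply Rmult_lt_0_compat; auto).
    rewrite !ln_mult by auto.
    pose proof (ln_entropy_denom_half n h ltac:(lia) Hn).
    pose proof (ln_entropy_denom_ge al ltac:(lra) n f ltac:(lia)).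
    assert (ln al + ln (INR h) <= ln (INR f)) by (rewrite <- ln_mult by lra; apply ln_le; [apply Rmult_lt_0_compat|]; lra).
    assert (0 < ln (1 - al) - ln al) by (pose proof (ln_increasing al (1 - al)); lra).
    assert ((INR f - INR n * al) * (ln (1 - al) - ln al) <= al * (ln (1 - al) - ln al)) by nra.
    unfold KL_half, Hent. rewrite minus_INR in * by lia. nra. }
  eapply Rle_trans; [exact HCR|]. apply Rmult_le_compat_r; [apply binom_nonneg|].
  rewrite <- (exp_ln R) by auto. apply exp_le_compat. exact HlnR.
Qed.

Lemma scale_incr_le_geometric N m f K al : (1 < m)%nat -> 0 < al < 1 / 2 ->
  INR f <= INR N * al -> (K < f < N)%nat ->
  scale_incr N m K <= al / (1 - al) * scale_incr N m (S K).
Proof.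
  intros Hm Hal Hf HK. unfold scale_incr.
  assert (Hth : 0 <= al / (1 - al) <= 1).
  { split; [apply Rdiv_le_0_compat; lra|].
    apply Rmult_le_reg_r with (1 - al); [lra|]. unfold Rdiv. rewrite Rmult_assoc, Rinv_l; lra. }
  assert (HC : Binomial.C (N - 1) K <= al / (1 - al) * Binomial.C (N - 1) (S K)).
  { apply binom_le_mul_succ; [lia|].
    assert (INR (S K) <= INR f) by (apply le_INR; lia).
    rewrite !minus_INR by lia. rewrite S_INR in *. simpl INR.
    apply Rmult_le_reg_r with (1 - al); [lra|].
    replace (al / (1 - al) * (INR N - 1 - INR K) * (1 - al)) with (al * (INR N - 1 - INR K)) by (field; lra).
    nra. }
  pose proof (binom_nonneg (N - 1) K). pose proof (binom_nonneg (N - 1) (S K)).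
  destruct m as [|[|p]]; [lia | lia|]. replace (S (S p) - 1)%nat with (S p) by lia.
  apply Rle_trans with ((al / (1 - al) * Binomial.C (N - 1) (S K)) ^ S p); [apply pow_incr; lra|].
  rewrite Rpow_mult_distr. apply Rmult_le_compat_r; [apply pow_le; lra|].
  simpl. pose proof (pow_le_one _ p Hth). pose proof (pow_le (al / (1 - al)) p ltac:(lra)). nra.
Qed.

Lemma hN_upper_large m al : (1 < m)%nat -> 0 < al < 1 / 2 ->
  exists c, 0 < c /\ forall N, (1 <= N)%nat -> 2 <= al * INR N -> 1 <= INR N * (1 / 2 - al) ->
    hN N m m al <= c * exp (- (INR N - 1) * (INR m - 1) * KL_half al).
Proof.
  intros Hm Hal.
  set (th := al / (1 - al)).
  assert (Hth : 0 <= th < 1).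
  { split; [apply Rdiv_le_0_compat; lra|].
    apply Rmult_lt_reg_r with (1 - al); [lra|]. unfold th, Rdiv. rewrite Rmult_assoc, Rinv_l; lra. }
  set (K0 := 1 + al * (ln (1 - al) - ln al) - ln al).
  exists (exp ((INR m - 1) * K0) / (1 - th)).
  split; [apply Rdiv_lt_0_compat; [apply exp_pos | lra]|].
  intros N HN H2 H3.
  set (f := floor_nat (INR N * al)). set (n := (N - 1)%nat). set (h := (n / 2)%nat).
  assert (F : INR f <= INR N * al < INR f + 1) by (apply floor_nat_spec; nra).
  assert (Hn : INR n = INR N - 1) by (unfold n; rewrite minus_INR by lia; reflexivity).
  assert (Hh : (2 * h <= n <= 2 * h + 1)%nat)
    by (unfold h; pose proof (Nat.div_mod n 2); pose proof (Nat.mod_upper_bound n 2); lia).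
  assert (HhR : INR n <= 2 * INR h + 1 /\ 2 * INR h <= INR n).
  { replace (2 * INR h) with (INR (2 * h)) by (rewrite mult_INR; simpl; ring).
    rewrite <- S_INR. split; apply le_INR; lia. }
  assert (Hf1 : (1 < f)%nat) by (apply INR_lt; simpl; lra).
  assert (Hfh : (f <= h)%nat) by (apply INR_le; lra).
  destruct (hN_between N m al Hm HN ltac:(lra) ltac:(fold f; lia)) as [_ Hup]. fold f in Hup.
  eapply Rle_trans; [exact Hup|].
  eapply Rle_trans.
  { apply (scale_fun_le_ratio N m f h th Hth ltac:(lia)). intros K HK.
    apply (scale_incr_le_geometric N m f K al Hm); lra || lia. }
  assert (Hbin : Binomial.C n f <= exp (K0 - INR n * KL_half al) * Binomial.C n h).
  { apply binom_ratio_entropy; auto; [lia | nra | rewrite Hn; lra]. }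
  assert (Hincr : scale_incr N m f <= exp ((INR m - 1) * (K0 - INR n * KL_half al)) * scale_incr N m h).
  { unfold scale_incr. fold n. replace (INR m - 1) with (INR (m - 1)) by (rewrite minus_INR by lia; reflexivity).
    rewrite <- exp_pow, <- Rpow_mult_distr. apply pow_incr. split; [apply binom_nonneg | exact Hbin]. }
  pose proof (scale_incr_pos N m h ltac:(lia)).
  apply Rle_trans with (exp ((INR m - 1) * (K0 - INR n * KL_half al)) / (1 - th)).
  - unfold Rdiv. apply Rmult_le_compat_r; [left; apply Rinv_0_lt_compat; lra|].
    apply Rmult_le_reg_r with (scale_incr N m h); auto. rewrite Rmult_assoc, Rinv_l; lra.
  - right. rewrite Hn. unfold Rdiv. rewrite Rmult_comm, (Rmult_comm (exp _)), Rmult_assoc, <- exp_plus.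
    f_equal. f_equal. ring.
Qed.

Lemma scale_total_le N m : (1 < m)%nat -> (1 <= N)%nat -> scale_total N m <= (2 ^ (N - 1)) ^ (m - 1).
Proof.
  intros Hm HN. unfold scale_total, scale_incr.
  replace N with (S (N - 1)) at 1 by lia. rewrite <- binom_row_sum.
  destruct m as [|[|p]]; [lia | lia|]. replace (S (S p) - 1)%nat with (S p) by lia.
  apply sumR_pow_le. intros. apply binom_nonneg.
Qed.

Lemma scale_fun_ge_binom N m k f : (1 < m)%nat -> (k < f <= N)%nat ->
  (Binomial.C (N - 1) k / 2 ^ (N - 1)) ^ (m - 1) <= scale_fun N m f.
Proof.
  intros Hm Hkf. pose proof (scale_total_pos N m ltac:(lia)).
  assert (P : 0 < (2 ^ (N - 1)) ^ (m - 1)) by (apply pow_lt, pow_lt; lra).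
  assert (Hk : scale_incr N m k <= sumR (scale_incr N m) f) by (apply sumR_term_le; auto using scale_incr_nonneg; lia).
  pose proof (scale_total_le N m Hm ltac:(lia)).
  unfold scale_fun. apply Rmult_le_reg_r with (scale_total N m); auto.
  unfold Rdiv at 2. rewrite Rmult_assoc, Rinv_l, Rmult_1_r by lra.
  unfold Rdiv. rewrite Rpow_mult_distr, pow_inv.
  apply Rle_trans with (Binomial.C (N - 1) k ^ (m - 1) * / (2 ^ (N - 1)) ^ (m - 1) * (2 ^ (N - 1)) ^ (m - 1)).
  - apply Rmult_le_compat_l; [|lra].
    apply Rmult_le_pos; [apply pow_le, binom_nonneg | left; apply Rinv_0_lt_compat; lra].
  - rewrite Rmult_assoc, Rinv_l, Rmult_1_r by lra. exact Hk.
Qed.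

Lemma ln_binom_ge al n k : 0 < al < 1 -> (0 < k < n)%nat ->
  INR n * Hent al - ln (INR (S n)) - (INR n * al - INR k) * (ln (INR (n - k)) - ln (INR k))
  <= ln (Binomial.C n k).
Proof.
  intros Hal Hk. pose proof (binom_max_term n k Hk) as Hmax.
  pose proof (ln_entropy_denom_le al Hal n k Hk).
  pose proof (entropy_denom_pos n k). pose proof (binom_pos n k ltac:(lia)).
  assert (HnR : 0 < INR n) by (apply lt_0_INR; lia). assert (0 < INR (S n)) by (apply lt_0_INR; lia).
  apply ln_le in Hmax; [|apply pow_lt; auto].
  rewrite ln_pow in Hmax by auto.
  rewrite ln_mult in Hmax by (try apply Rmult_lt_0_compat; auto).
  rewrite ln_mult in Hmax by auto. lra.
Qed.

Lemma hN_lower_large m al : (1 < m)%nat -> 0 < al < 1 / 2 ->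
  exists K, forall N, (1 <= N)%nat -> 4 <= al * INR N -> 1 <= INR N * (1 / 2 - al) ->
    0 < hN N m m al /\
    (INR m - 1) * (- ln (INR N) - (INR N - 1) * KL_half al - K) <= ln (hN N m m al).
Proof.
  intros Hm Hal. exists (2 * (ln 2 - ln al)). intros N HN H4 H3.
  set (f := floor_nat (INR N * al)). set (n := (N - 1)%nat). set (k := (f - 1)%nat).
  assert (F : INR f <= INR N * al < INR f + 1) by (apply floor_nat_spec; nra).
  assert (Hn : INR n = INR N - 1) by (unfold n; rewrite minus_INR by lia; reflexivity).
  assert (Hf : (3 < f)%nat) by (apply INR_lt; simpl; lra).
  assert (Hk : INR k = INR f - 1) by (unfold k; rewrite minus_INR by lia; reflexivity).
  assert (HfN : (S f <= N)%nat) by (apply INR_le; rewrite S_INR; pose proof (pos_INR N); lra).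
  assert (Hkn : (0 < k < n)%nat) by (unfold k, n; lia).
  assert (HkR : 0 < INR k) by (apply lt_0_INR; lia).
  assert (HnkR : 0 < INR (n - k)) by (apply lt_0_INR; lia).
  destruct (hN_between N m al Hm HN ltac:(lra) HfN) as [Hlow _]. fold f in Hlow.
  pose proof (scale_fun_ge_binom N m k f Hm ltac:(unfold k; lia)) as Hbin. fold n in Hbin.
  pose proof (binom_pos n k ltac:(lia)).
  assert (P2 : 0 < 2 ^ n) by (apply pow_lt; lra).
  assert (Hpos : 0 < (Binomial.C n k / 2 ^ n) ^ (m - 1)) by (apply pow_lt, Rdiv_lt_0_compat; auto).
  split; [lra|].
  apply Rle_trans with (ln ((Binomial.C n k / 2 ^ n) ^ (m - 1))); [|apply ln_le; lra].
  rewrite ln_pow by (apply Rdiv_lt_0_compat; auto).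
  rewrite ln_div, ln_pow by lra.
  replace (INR (m - 1)) with (INR m - 1) by (rewrite minus_INR by lia; reflexivity).
  assert (1 <= INR m) by (apply (le_INR 1); lia).
  apply Rmult_le_compat_l; [lra|].
  pose proof (ln_binom_ge al n k ltac:(lra) Hkn) as Hln.
  replace (INR (S n)) with (INR N) in Hln by (f_equal; unfold n; lia).
  assert ((INR n * al - INR k) * (ln (INR (n - k)) - ln (INR k)) <= 2 * (ln 2 - ln al)).
  { assert (0 <= ln (INR (n - k)) - ln (INR k)).
    { assert (ln (INR k) <= ln (INR (n - k))); [|lra]. apply ln_le; auto. rewrite minus_INR by lia. nra. }
    assert (ln (INR (n - k)) - ln (INR k) <= ln 2 - ln al).
    { assert (ln (INR (n - k)) <= ln (INR n)) by (apply ln_le; auto; apply le_INR; lia).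
      assert (ln (al * INR n) <= ln (2 * INR k)) by (apply ln_le; nra).
      rewrite !ln_mult in * by lra. lra. }
    apply Rle_trans with (2 * (ln (INR (n - k)) - ln (INR k))); [apply Rmult_le_compat_r; nra|lra]. }
  unfold KL_half. rewrite <- Hn. lra.
Qed.

Lemma hN_le_one N m al : (1 < m)%nat -> (1 <= N)%nat -> 0 <= al < 1 -> hN N m m al <= 1.
Proof.
  intros Hm HN Hal. set (f := floor_nat (INR N * al)).
  assert (F : INR f <= INR N * al) by (apply floor_nat_spec; pose proof (pos_INR N); nra).
  assert (HfN : (S f <= N)%nat) by (apply INR_lt; assert (1 <= INR N) by (apply (le_INR 1); lia); nra).
  destruct (hN_between N m al Hm HN ltac:(lra) HfN) as [_ Hup].
  pose proof (scale_fun_bounds N m (S f) HN HfN). fold f in Hup. lra.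
Qed.

Lemma eventually_large al : 0 < al < 1 / 2 -> exists N0, forall N, (N0 <= N)%nat ->
  (1 <= N)%nat /\ 4 <= al * INR N /\ 1 <= INR N * (1 / 2 - al).
Proof.
  intros Hal. destruct (INR_archimed 1 (Rmax 1 (Rmax (4 / al) (1 / (1 / 2 - al)))) ltac:(lra)) as [N0 HN0].
  exists N0. intros N HN. apply le_INR in HN.
  pose proof (Rmax_l 1 (Rmax (4 / al) (1 / (1 / 2 - al)))). pose proof (Rmax_r 1 (Rmax (4 / al) (1 / (1 / 2 - al)))).
  pose proof (Rmax_l (4 / al) (1 / (1 / 2 - al))). pose proof (Rmax_r (4 / al) (1 / (1 / 2 - al))).
  split; [apply INR_le; simpl; lra|]. split.
  - apply Rmult_le_reg_r with (/ al); [apply Rinv_0_lt_compat; lra|].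
    replace (al * INR N * / al) with (INR N) by (field; lra). unfold Rdiv in *. lra.
  - apply Rmult_le_reg_r with (/ (1 / 2 - al)); [apply Rinv_0_lt_compat; lra|].
    replace (INR N * (1 / 2 - al) * / (1 / 2 - al)) with (INR N) by (field; lra). unfold Rdiv in *. lra.
Qed.

Lemma hN_upper m al : (1 < m)%nat -> 0 < al < 1 / 2 ->
  exists c, 0 < c /\ forall N, (1 <= N)%nat ->
    hN N m m al <= c * exp (- (INR N - 1) * (INR m - 1) * KL_half al).
Proof.
  intros Hm Hal. destruct (hN_upper_large m al Hm Hal) as [c [Hc Hup]].
  destruct (eventually_large al Hal) as [N0 HN0].
  pose proof (KL_half_nonneg al ltac:(lra)).
  assert (1 <= INR m) by (apply (le_INR 1); lia).
  exists (Rmax c (exp (INR N0 * (INR m - 1) * KL_half al))).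
  split; [eapply Rlt_le_trans; [exact Hc | apply Rmax_l]|].
  intros N HN. destruct (le_lt_dec N0 N) as [HNN | HNN].
  - destruct (HN0 N HNN) as [_ [H4 H3]].
    eapply Rle_trans; [apply Hup; auto; lra|].
    apply Rmult_le_compat_r; [left; apply exp_pos | apply Rmax_l].
  (* For the finitely many small [N], the right-hand side is at least [1 >= hN]. *)
  - apply Rle_trans with 1; [apply hN_le_one; auto; lra|].
    apply Rle_trans with (exp (INR N0 * (INR m - 1) * KL_half al) * exp (- (INR N - 1) * (INR m - 1) * KL_half al)).
    + rewrite <- exp_plus, <- exp_0 at 1. apply exp_le_compat.
      assert (INR N <= INR N0) by (apply le_INR; lia).
      assert (0 <= (INR N0 - INR N + 1) * ((INR m - 1) * KL_half al)) by (apply Rmult_le_pos; nra).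
      nra.
    + apply Rmult_le_compat_r; [left; apply exp_pos | apply Rmax_r].
Qed.

Lemma is_lim_seq_scal_inv_INR a : is_lim_seq (fun N => a * / INR N) 0.
Proof.
  replace (Finite 0) with (Rbar_mult a 0) by (simpl; f_equal; ring).
  apply is_lim_seq_scal_l. replace (Finite 0) with (Rbar_inv p_infty) by reflexivity.
  apply is_lim_seq_inv; [apply is_lim_seq_INR | discriminate].
Qed.

Lemma is_lim_seq_scal_ln_div_INR a : is_lim_seq (fun N => a * (ln (INR N) / INR N)) 0.
Proof.
  replace (Finite 0) with (Rbar_mult a 0) by (simpl; f_equal; ring).
  apply is_lim_seq_scal_l, (is_lim_comp_seq (fun y => ln y / y) INR p_infty 0).
  - apply is_lim_div_ln_p.
  - exists 0%nat. intros. discriminate.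
  - apply is_lim_seq_INR.
Qed.

Lemma hN_log_limit m al : (1 < m)%nat -> 0 < al < 1 / 2 ->
  is_lim_seq (fun N => / INR N * ln (hN N m m al)) (- (INR m - 1) * KL_half al).
Proof.
  intros Hm Hal.
  destruct (hN_upper_large m al Hm Hal) as [c [Hc Hup]].
  destruct (hN_lower_large m al Hm Hal) as [K Hlow].
  destruct (eventually_large al Hal) as [N0 HN0].
  set (A := - (INR m - 1) * KL_half al).
  apply (is_lim_seq_le_le_loc
           (fun N => A + (INR m - 1) * (KL_half al - K) * / INR N + - (INR m - 1) * (ln (INR N) / INR N)) _
           (fun N => A + (ln c + (INR m - 1) * KL_half al) * / INR N)).
  - exists N0. intros N HNN. destruct (HN0 N HNN) as [HN [H4 H3]].
    assert (HNR : 0 < / INR N) by (apply Rinv_0_lt_compat, lt_0_INR; lia).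
    destruct (Hlow N HN H4 H3) as [Hpos Hl].
    assert (Hu : ln (hN N m m al) <= ln c + - (INR N - 1) * (INR m - 1) * KL_half al).
    { rewrite <- (ln_exp (- (INR N - 1) * (INR m - 1) * KL_half al)), <- ln_mult by (auto; apply exp_pos).
      apply ln_le; auto. apply Hup; auto; lra. }
    apply Rmult_le_compat_l with (r := / INR N) in Hl, Hu; try lra.
    unfold A. split.
    + eapply Rle_trans; [|exact Hl]. right. field. apply not_0_INR. lia.
    + eapply Rle_trans; [exact Hu|]. right. field. apply not_0_INR. lia.
  - replace (Finite A) with (Finite (A + 0 + 0)) by (f_equal; ring).
    apply is_lim_seq_plus'; [apply is_lim_seq_plus'|].
    + apply is_lim_seq_const.
    + apply is_lim_seq_scal_inv_INR.
    + apply is_lim_seq_scal_ln_div_INR.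
  - replace (Finite A) with (Finite (A + 0)) by (f_equal; ring).
    apply is_lim_seq_plus'; [apply is_lim_seq_const | apply is_lim_seq_scal_inv_INR].
Qed.

Theorem theorem1 (m : nat) (Hm : (1 < m)%nat) :
  (forall N i : nat, (1 <= N)%nat -> (i <= N)%nat ->
     absorb_prob N m m i =
     sumR (fun k => Binomial.C (N - 1) k ^ (m - 1)) i /
     sumR (fun k => Binomial.C (N - 1) k ^ (m - 1)) N)
  /\
  (forall alpha : R, 0 < alpha < 1 / 2 ->
     (exists c : R, 0 < c /\
        forall N : nat, (1 <= N)%nat ->
          hN N m m alpha <=
          c * exp (- (INR N - 1) * (INR m - 1) * KL_half alpha))
     /\
     is_lim_seq (fun N : nat => / INR N * ln (hN N m m alpha))
                (- (INR m - 1) * KL_half alpha)).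
Proof.
  split.
  - intros N i HN Hi. exact (absorb_prob_scale_fun N m i Hm HN Hi).
  - intros al Hal. split; [apply hN_upper | apply hN_log_limit]; auto.
Qed.
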